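(* Let $G$ be a compactly generated totally disconnected locally compact group and $N$ a closed normal subgroup of $G$. If there is a Cayley-Abels graph $\Gamma$ for $G$ such that $\deg(\Gamma/N)=\deg(\Gamma)$, then there exists a compact normal subgroup $L$ of $G$ acting trivially on $\Gamma$ such that $L$ is an open subgroup of $N$.
   Context: Graphs $\Gamma=(V,E,o,r)$ have directed edges with initial-vertex map $o$ and involutive reversal $e\mapsto\bar e$; $\deg(v)=|o^{-1}(v)|$, $\deg(\Gamma)=\sup_v\deg(v)$. For $N$ acting on $\Gamma$, $\Gamma/N$ is the quotient graph whose vertices and edges are the $N$-orbits of vertices and edges, with $o(Ne)=No(e)$, $\overline{Ne}=N\bar e$. A Cayley-Abels graph for a totally disconnected locally compact group $G$ is a connected graph of finite degree on which $G$ acts vertex-transitively by automorphisms with compact open vertex stabilizers. *)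

From Stdlib Require Import List Arith.
Import ListNotations.
Set Implicit Arguments.

Definition is_topology (X : Type) (op : (X -> Prop) -> Prop) : Prop :=
  op (fun _ => True) /\
  (forall F : (X -> Prop) -> Prop, (forall U, F U -> op U) ->
      op (fun x => exists U, F U /\ U x)) /\
  (forall U V, op U -> op V -> op (fun x => U x /\ V x)).

Definition prod_open (X Y : Type) (opX : (X -> Prop) -> Prop)
  (opY : (Y -> Prop) -> Prop) (W : X * Y -> Prop) : Prop :=
  forall p, W p -> exists U V, opX U /\ opY V /\ U (fst p) /\ V (snd p) /\
     (forall x y, U x -> V y -> W (x, y)).

Definition continuous (X Y : Type) (opX : (X -> Prop) -> Prop)
  (opY : (Y -> Prop) -> Prop) (f : X -> Y) : Prop :=
  forall V, opY V -> opX (fun x => V (f x)).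

Record topgroup := TopGroup {
  tg :> Type;
  tmul : tg -> tg -> tg;
  tone : tg;
  tinv : tg -> tg;
  topen : (tg -> Prop) -> Prop;
  tmulA : forall x y z, tmul x (tmul y z) = tmul (tmul x y) z;
  tmul1g : forall x, tmul tone x = x;
  tmulg1 : forall x, tmul x tone = x;
  tmulVg : forall x, tmul (tinv x) x = tone;
  tmulgV : forall x, tmul x (tinv x) = tone;
  ttopology : is_topology topen;
  tmul_cont : continuous (prod_open topen topen) topen
                 (fun p => tmul (fst p) (snd p));
  tinv_cont : continuous topen topen tinv
}.

Section TopGroupDefs.
Variable G : topgroup.

Definition is_open (U : G -> Prop) : Prop := topen G U.
Definition is_closed (C : G -> Prop) : Prop := is_open (fun x => ~ C x).

Definition compact (K : G -> Prop) : Prop :=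
  forall F : (G -> Prop) -> Prop,
    (forall U, F U -> is_open U) ->
    (forall x, K x -> exists U, F U /\ U x) ->
    exists l : list (G -> Prop),
      (forall U, In U l -> F U) /\ (forall x, K x -> exists U, In U l /\ U x).

Definition connected_subset (S : G -> Prop) : Prop :=
  ~ exists U V, is_open U /\ is_open V /\
      (forall x, S x -> U x \/ V x) /\
      (exists x, S x /\ U x) /\ (exists x, S x /\ V x) /\
      (forall x, S x -> U x -> V x -> False).

Definition totally_disconnected : Prop :=
  forall S, connected_subset S -> forall x y, S x -> S y -> x = y.

Definition locally_compact : Prop :=
  forall x, exists U K, is_open U /\ U x /\ (forall y, U y -> K y) /\ compact K.

Definition tdlc : Prop := totally_disconnected /\ locally_compact.

Definition subgroup (H : G -> Prop) : Prop :=
  H (tone G) /\ (forall x y, H x -> H y -> H (tmul G x y)) /\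
  (forall x, H x -> H (tinv G x)).

Definition normal_subgroup (H : G -> Prop) : Prop :=
  subgroup H /\ forall g x, H x -> H (tmul G (tmul G g x) (tinv G g)).

Definition generates (K : G -> Prop) : Prop :=
  forall H, subgroup H -> (forall x, K x -> H x) -> forall x, H x.

Definition compactly_generated : Prop :=
  exists K, compact K /\ generates K.

Definition open_in (N L : G -> Prop) : Prop :=
  exists U, is_open U /\ forall x, L x <-> (U x /\ N x).

End TopGroupDefs.
Arguments is_open {G} U.
Arguments is_closed {G} C.
Arguments compact {G} K.
Arguments subgroup {G} H.
Arguments normal_subgroup {G} H.
Arguments open_in {G} N L.

Record graph := Graph {
  V : Type;
  E : Type;
  o : E -> V;
  rev : E -> E;
  rev_inv : forall e, rev (rev e) = e
}.

Arguments o {_} _.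
Arguments rev {_} _.
Definition r {Γ : graph} (e : E Γ) : V Γ := o (rev e).

Inductive reach {Γ : graph} (v : V Γ) : V Γ -> Prop :=
| reach_refl : reach v v
| reach_step : forall e, reach v (o e) -> reach v (r e).

Definition connected (Γ : graph) : Prop :=
  (exists v : V Γ, True) /\ forall v w : V Γ, reach v w.

Definition has_card (T : Type) (P : T -> Prop) (n : nat) : Prop :=
  exists l : list T, NoDup l /\ length l = n /\ forall x, P x <-> In x l.

Definition vdeg {Γ : graph} (v : V Γ) (n : nat) : Prop :=
  has_card (fun e : E Γ => o e = v) n.

Definition graph_degree (Γ : graph) (d : nat) : Prop :=
  (forall v : V Γ, exists n, vdeg v n /\ n <= d) /\ (exists v : V Γ, vdeg v d).

Definition finite_degree (Γ : graph) : Prop := exists d, graph_degree Γ d.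

Record gaction (G : topgroup) (Γ : graph) := GAction {
  actV : G -> V Γ -> V Γ;
  actE : G -> E Γ -> E Γ;
  actV1 : forall v, actV (tone G) v = v;
  actVM : forall g h v, actV (tmul G g h) v = actV g (actV h v);
  actE1 : forall e, actE (tone G) e = e;
  actEM : forall g h e, actE (tmul G g h) e = actE g (actE h e);
  act_o : forall g e, o (actE g e) = actV g (o e);
  act_rev : forall g e, rev (actE g e) = actE g (rev e)
}.

Section ActionDefs.
Variables (G : topgroup) (Γ : graph) (A : gaction G Γ).

Definition stabilizer (v : V Γ) : G -> Prop := fun g => actV A g v = v.

Definition cayley_abels : Prop :=
  connected Γ /\ finite_degree Γ /\
  (forall v w, exists g, actV A g v = w) /\
  (forall v, is_open (stabilizer v) /\ compact (stabilizer v)).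

Definition acts_trivially (L : G -> Prop) : Prop :=
  forall g, L g -> (forall v, actV A g v = v) /\ (forall e, actE A g e = e).

(* quotient graph Γ/N : vertices are N-orbits of vertices, edges are N-orbits
   of edges, o(Ne) = N o(e). *)
Definition same_orbitV (N : G -> Prop) (v w : V Γ) : Prop :=
  exists g, N g /\ actV A g v = w.
Definition same_orbitE (N : G -> Prop) (e f : E Γ) : Prop :=
  exists g, N g /\ actE A g e = f.

(* the quotient vertex N v has degree n: there are exactly n N-orbits of
   edges Ne with o(Ne) = Nv *)
Definition qvdeg (N : G -> Prop) (v : V Γ) (n : nat) : Prop :=
  exists l : list (E Γ), length l = n /\
    (forall e, In e l -> same_orbitV N (o e) v) /\
    ForallOrdPairs (fun e f => ~ same_orbitE N e f) l /\
    (forall e, same_orbitV N (o e) v -> exists f, In f l /\ same_orbitE N e f).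

Definition quotient_degree (N : G -> Prop) (d : nat) : Prop :=
  (forall v, exists n, qvdeg N v n /\ n <= d) /\ (exists v, qvdeg N v d).

End ActionDefs.

(* Equality of degrees forces N to act on the edges at each vertex with
   trivial orbits: transporting a set of deg(Γ) pairwise N-inequivalent edges
   at one vertex to any vertex w yields deg(Γ) distinct edges at w, hence all
   of them.  An element of N fixing a vertex therefore fixes every edge there,
   and by connectedness all of Γ.  So L := N ∩ Stab(v) is the kernel of the
   action restricted to N: it is normal, open in N (Stab(v) is open) and
   compact (closed in the compact Stab(v)). *)
From Stdlib Require Import List.
From Stdlib Require Import Classical ClassicalEpsilon Lia.

Lemma ForallOrdPairs_map {T U : Type} {R : T -> T -> Prop} {R' : U -> U -> Prop}
  (f : T -> U) {l : list T} :
  ForallOrdPairs R l ->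
  (forall a b, In a l -> In b l -> R a b -> R' (f a) (f b)) ->
  ForallOrdPairs R' (map f l).
Proof.
  induction 1 as [|x l Hx Hl IH]; simpl; intros HRR'; constructor.
  - rewrite Forall_forall in *. intros y Hy. apply in_map_iff in Hy.
    destruct Hy as [z [<- Hz]]. apply HRR'; auto.
  - apply IH. intros; apply HRR'; auto.
Qed.

Lemma sublist_satisfying {T : Type} (P : T -> Prop) (l : list T) :
  exists l', (forall x, In x l' -> P x) /\ (forall x, In x l -> P x -> In x l').
Proof.
  induction l as [|x l [l' [Hl'P Hl'l]]].
  - exists nil; simpl; tauto.
  - destruct (classic (P x)) as [Hx|Hx].
    + exists (x :: l'). simpl. split.
      * intros y [<-|Hy]; auto.
      * intros y [<-|Hy] HPy; auto.
    + exists l'. split; auto. intros y [<-|Hy] HPy; [contradiction|auto].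
Qed.

Section TopGroupFacts.
Context {G : topgroup}.

Lemma tinv_involutive (x : G) : tinv G (tinv G x) = x.
Proof.
  rewrite <- (tmulg1 G (tinv G (tinv G x))), <- (tmulVg G x), tmulA, tmulVg.
  apply tmul1g.
Qed.

Lemma normal_subgroup_conjV (N : G -> Prop) (g c : G) :
  normal_subgroup N -> N c -> N (tmul G (tinv G g) (tmul G c g)).
Proof.
  intros [_ Hnorm] Hc. pose proof (Hnorm (tinv G g) c Hc) as Hconj.
  rewrite tinv_involutive, <- tmulA in Hconj. exact Hconj.
Qed.

Lemma compact_ext {K K' : G -> Prop} :
  (forall x, K x <-> K' x) -> compact K -> compact K'.
Proof.
  intros HKK' HK F HFo Hcov.
  destruct (HK F HFo) as [l [HlF Hl]]; [intros x Hx; apply Hcov, HKK'; auto|].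
  exists l. split; auto. intros x Hx. apply Hl, HKK', Hx.
Qed.

Lemma compact_closed_meet (K C : G -> Prop) :
  compact K -> is_closed C -> compact (fun x => K x /\ C x).
Proof.
  intros HK HC F HFo Hcov.
  destruct (HK (fun U => F U \/ U = (fun x => ~ C x))) as [l [HlF Hl]].
  - intros U [HU| ->]; auto.
  - intros x Hx. destruct (classic (C x)) as [HCx|HCx].
    + destruct (Hcov x (conj Hx HCx)) as [U [HU HUx]]. exists U; auto.
    + exists (fun x => ~ C x); auto.
  - destruct (sublist_satisfying F l) as [l' [Hl'F Hl'l]].
    exists l'. split; auto. intros x [HKx HCx].
    destruct (Hl x HKx) as [U [HUl HUx]].
    destruct (HlF U HUl) as [HU| ->]; [|contradiction].
    exists U; auto.
Qed.

End TopGroupFacts.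

Section Actions.
Context {G : topgroup} {Γ : graph} {A : gaction G Γ}.

Lemma actV_invK g v : actV A (tinv G g) (actV A g v) = v.
Proof. rewrite <- actVM, tmulVg. apply actV1. Qed.

Lemma actV_Kinv g v : actV A g (actV A (tinv G g) v) = v.
Proof. rewrite <- actVM, tmulgV. apply actV1. Qed.

Lemma actE_invK g e : actE A (tinv G g) (actE A g e) = e.
Proof. rewrite <- actEM, tmulVg. apply actE1. Qed.

Lemma actE_Kinv g e : actE A g (actE A (tinv G g) e) = e.
Proof. rewrite <- actEM, tmulgV. apply actE1. Qed.

Lemma same_orbitE_refl (N : G -> Prop) e : subgroup N -> same_orbitE A N e e.
Proof. intros [HN1 _]. exists (tone G). split; auto. apply actE1. Qed.

Lemma same_orbitE_sym (N : G -> Prop) e f :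
  subgroup N -> same_orbitE A N e f -> same_orbitE A N f e.
Proof.
  intros [_ [_ HNinv]] [c [Hc <-]]. exists (tinv G c). split; auto.
  apply actE_invK.
Qed.

(* Each edge of the list is moved by an element of N into the star of v0 and
   then by one fixed g into the star of w; distinct N-orbits stay distinct
   because N is normal. *)
Lemma inequivalent_edges_transport {N : G -> Prop} {v0 : V Γ} (w : V Γ) {l : list (E Γ)} :
  normal_subgroup N -> (exists g, actV A g v0 = w) ->
  (forall e, In e l -> same_orbitV A N (o e) v0) ->
  ForallOrdPairs (fun e f => ~ same_orbitE A N e f) l ->
  exists l', length l' = length l /\ (forall e, In e l' -> o e = w) /\
    ForallOrdPairs (fun e f => ~ same_orbitE A N e f) l'.
Proof.
  intros HNn [g Hg] Hlv0 Hlpair.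
  pose proof HNn as [[_ [HNmul HNinv]] _].
  set (k := fun e => epsilon (inhabits (tone G))
                       (fun n => N n /\ actV A n (o e) = v0)).
  assert (Hk : forall e, In e l -> N (k e) /\ actV A (k e) (o e) = v0).
  { intros e He. apply epsilon_spec. destruct (Hlv0 e He) as [n Hn]. exists n; exact Hn. }
  exists (map (fun e => actE A (tmul G g (k e)) e) l). split; [|split].
  - apply length_map.
  - intros x Hx. apply in_map_iff in Hx. destruct Hx as [e [<- He]].
    rewrite act_o, actVM, (proj2 (Hk e He)). exact Hg.
  - apply (ForallOrdPairs_map _ Hlpair). intros a b Ha Hb Hab [c [Hc Hcab]].
    apply Hab. destruct (Hk a Ha) as [Hka _], (Hk b Hb) as [Hkb _].
    exists (tmul G (tinv G (k b)) (tmul G (tmul G (tinv G g) (tmul G c g)) (k a))).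
    split.
    + apply HNmul; [apply HNinv; exact Hkb|].
      apply HNmul; [apply normal_subgroup_conjV; assumption | exact Hka].
    + cbv beta in Hcab. rewrite !actEM in Hcab. rewrite !actEM, Hcab, !actE_invK. reflexivity.
Qed.

Lemma same_orbitE_star_eq {N : G -> Prop} {d : nat} :
  normal_subgroup N -> (forall v w : V Γ, exists g, actV A g v = w) ->
  graph_degree Γ d -> quotient_degree A N d ->
  forall e f, o e = o f -> same_orbitE A N e f -> e = f.
Proof.
  intros HNn Htrans [Hdeg _] [_ [v0 [l [Hlen [Hlv0 [Hlpair _]]]]]] e f Hef Horb.
  destruct (inequivalent_edges_transport (o e) HNn (Htrans v0 (o e)) Hlv0 Hlpair)
    as [l' [Hlen' [Hl'o Hl'pair]]].
  destruct HNn as [HN _].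
  assert (Hl'nodup : NoDup l').
  { apply NoDup_iff_ForallOrdPairs.
    rewrite <- (map_id l'). apply (ForallOrdPairs_map _ Hl'pair).
    intros a b _ _ Hab ->. apply Hab, same_orbitE_refl, HN. }
  destruct (Hdeg (o e)) as [n [[star [_ [Hstar_len Hstar]]] Hn]].
  assert (Hstar_l' : incl star l').
  { apply NoDup_length_incl; [exact Hl'nodup | lia |].
    intros x Hx. apply Hstar, Hl'o, Hx. }
  assert (He : In e l') by (apply Hstar_l', Hstar; reflexivity).
  assert (Hf : In f l') by (apply Hstar_l', Hstar; symmetry; exact Hef).
  destruct (ForallOrdPairs_In Hl'pair e f He Hf) as [|[Hne|Hne]]; auto;
    exfalso; apply Hne; auto using same_orbitE_sym.
Qed.

Lemma fixes_reach {g : G} {b : V Γ} :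
  (forall e, actV A g (o e) = o e -> actE A g e = e) ->
  actV A g b = b -> forall v, reach b v -> actV A g v = v.
Proof.
  intros Hedges Hb v Hreach. induction Hreach as [|e _ IH]; auto.
  unfold r. rewrite <- act_o, <- act_rev, (Hedges e IH). reflexivity.
Qed.

Definition kernel_in (N : G -> Prop) : G -> Prop :=
  fun g => N g /\ (forall v, actV A g v = v) /\ (forall e, actE A g e = e).

Lemma kernel_in_normal (N : G -> Prop) :
  normal_subgroup N -> normal_subgroup (kernel_in N).
Proof.
  intros [[HN1 [HNmul HNinv]] Hnorm]. split; [split; [|split]|].
  - split; auto. split; intros; [apply actV1 | apply actE1].
  - intros x y [Hx [HxV HxE]] [Hy [HyV HyE]]. split; auto.
    split; intros; [rewrite actVM, HyV, HxV | rewrite actEM, HyE, HxE]; reflexivity.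
  - intros x [Hx [HxV HxE]]. split; auto. split.
    + intro v. rewrite <- (HxV v) at 1. apply actV_invK.
    + intro e. rewrite <- (HxE e) at 1. apply actE_invK.
  - intros g x [Hx [HxV HxE]]. split; auto. split; intros.
    + rewrite !actVM, HxV. apply actV_Kinv.
    + rewrite !actEM, HxE. apply actE_Kinv.
Qed.

Lemma kernel_in_eq_stabilizer_meet {N : G -> Prop} {d : nat} {b : V Γ} :
  normal_subgroup N -> (forall v w : V Γ, exists g, actV A g v = w) ->
  (forall v, reach b v) -> graph_degree Γ d -> quotient_degree A N d ->
  forall g, kernel_in N g <-> stabilizer A b g /\ N g.
Proof.
  intros HNn Htrans Hreach Hdeg Hqdeg g. split.
  - intros [Hg [HgV _]]. split; [apply HgV | exact Hg].
  - intros [Hgb Hg].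
    assert (HgE : forall e, actV A g (o e) = o e -> actE A g e = e).
    { intros e He. symmetry. apply (same_orbitE_star_eq HNn Htrans Hdeg Hqdeg).
      - rewrite act_o. symmetry. exact He.
      - exists g. split; auto. }
    split; [exact Hg | split].
    + intro v. apply (fixes_reach HgE Hgb), Hreach.
    + intro e. apply HgE, (fixes_reach HgE Hgb), Hreach.
Qed.

End Actions.

Arguments kernel_in {G Γ} A N.

Theorem mainTheorem5 (G : topgroup) (N : G -> Prop) (Γ : graph)
  (A : gaction G Γ) :
  tdlc G -> compactly_generated G ->
  normal_subgroup N -> is_closed N ->
  cayley_abels A ->
  (exists d, graph_degree Γ d /\ quotient_degree A N d) ->
  exists L : G -> Prop,
    normal_subgroup L /\ compact L /\ acts_trivially A L /\
    (forall g, L g -> N g) /\ open_in N L.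
Proof.
  intros _ _ HNn HNc [[[b _] Hreach] [_ [Htrans Hstab]]] [d [Hdeg Hqdeg]].
  pose proof (kernel_in_eq_stabilizer_meet HNn Htrans (Hreach b) Hdeg Hqdeg) as Hkernel.
  destruct (Hstab b) as [Hopen Hcompact].
  exists (kernel_in A N). split; [|split; [|split; [|split]]].
  - apply kernel_in_normal, HNn.
  - apply (compact_ext (fun g => iff_sym (Hkernel g))), compact_closed_meet; assumption.
  - intros g [_ HgA]. exact HgA.
  - intros g [Hg _]. exact Hg.
  - exists (stabilizer A b). split; assumption.
Qed.
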